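(* Let $B\in\mathbb{C}^{n\times n}$ be a Hermitian positive definite matrix with eigenvalues $\sigma_1\ge\sigma_2\ge\dots\ge\sigma_n>0$ and corresponding orthonormal eigenvectors $v_1,\dots,v_n$. Let $1\le k<l<n$, and set $V_k=[v_1,\dots,v_k]$, $V_{l\backslash k}=[v_{k+1},\dots,v_l]$, $V_l^{\perp}=[v_{l+1},\dots,v_n]$. Let $X\in\mathbb{C}^{n\times k}$ satisfy $X^*X=I_k$, and write \[ X=[V_k,V_{l\backslash k},V_l^{\perp}]\begin{bmatrix}X_k\\ X_{l\backslash k}\\ X_l^{\perp}\end{bmatrix},\qquad X_k\in\mathbb{C}^{k\times k},\ X_{l\backslash k}\in\mathbb{C}^{(l-k)\times k},\ X_l^{\perp}\in\mathbb{C}^{(n-l)\times k}, \] where $X_k$ is assumed nonsingular. Then, provided $\tan\angle(V_k,X)\neq 0$, \[ \frac{\tan\angle(V_k,BX)}{\tan\angle(V_k,X)}\le\frac{\sigma_{l+1}}{\sigma_k}+\frac{\sigma_{k+1}-\sigma_{l+1}}{\sigma_k}\cdot\frac{\bigl\lVert X_{l\backslash k}X_k^{-1}\bigr\rVert_2}{\left\lVert\begin{bmatrix}X_{l\backslash k}\\ X_l^{\perp}\end{bmatrix}X_k^{-1}\right\rVert_2}. \]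
   Context: For $n\times k$ matrices $V_k$ (with orthonormal columns) and $Z$ of full column rank, $\angle(V_k,Z)$ denotes the largest principal angle between $\operatorname{span}\{V_k\}$ and $\operatorname{span}\{Z\}$. In the setting of the claim, writing $Z$ in the eigenbasis as $Z=[V_k,V_{l\backslash k},V_l^{\perp}][Z_k;Z_{l\backslash k};Z_l^{\perp}]$ with $Z_k$ nonsingular, one has $\tan\angle(V_k,Z)=\bigl\lVert [Z_{l\backslash k};Z_l^{\perp}]Z_k^{-1}\bigr\rVert_2$. $\lVert\cdot\rVert_2$ is the spectral norm. *)

From HB Require Import structures.
From mathcomp Require Import all_boot all_order all_algebra.
From mathcomp Require Import classical_sets reals trigo.
From mathcomp.real_closed Require Import complex.
Set Implicit Arguments. Unset Strict Implicit. Unset Printing Implicit Defensive.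
Import Order.TTheory GRing.Theory Num.Theory.
Local Open Scope ring_scope.
Local Open Scope classical_set_scope.

Section Defs.
Variable R : realType.

Definition adjmx m n (A : 'M[R[i]]_(m, n)) : 'M[R[i]]_(n, m) :=
  (map_mx (@conjc R) A)^T.

Definition vnorm n (x : 'cV[R[i]]_n) : R :=
  Num.sqrt (\sum_(i < n) (complex.Re (x i 0) ^+ 2 + complex.Im (x i 0) ^+ 2)).

Definition specnorm m n (A : 'M[R[i]]_(m, n)) : R :=
  sup [set r | exists x : 'cV[R[i]]_n, vnorm x <= 1 /\ r = vnorm (A *m x)].

(* cosine of the largest principal angle between span V (V with orthonormal
   columns) and span Z (same number of columns):
   min over nonzero u in span Z of ||V^* u|| / ||u|| *)
Definition cos_max_angle n k (V Z : 'M[R[i]]_(n, k)) : R :=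
  inf [set r | exists y : 'cV[R[i]]_k,
          Z *m y != 0 /\ r = vnorm (adjmx V *m (Z *m y)) / vnorm (Z *m y)].

Definition max_angle n k (V Z : 'M[R[i]]_(n, k)) : R := acos (cos_max_angle V Z).

Definition tan_angle n k (V Z : 'M[R[i]]_(n, k)) : R := tan (max_angle V Z).

End Defs.

From HB Require Import structures.
From mathcomp Require Import all_boot all_order all_algebra.
From mathcomp Require Import classical_sets reals trigo.
From mathcomp.real_closed Require Import complex.
From mathcomp Require Import ring lra zify.
Set Implicit Arguments. Unset Strict Implicit. Unset Printing Implicit Defensive.
Import Order.TTheory GRing.Theory Num.Theory.
Local Open Scope ring_scope.

(* In the eigenbasis, V_k^* Z y is the top block of the coordinates of Z y, so
   the cosine of the largest angle is the infimum over x = Z_k y <> 0 of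
   |x| / sqrt (|x|^2 + |A x|^2), where A = [Z_{l\k}; Z_l^perp] Z_k^-1; this
   infimum is 1 / sqrt (1 + ||A||^2), whence tan angle (V_k, Z) = ||A||.
   Applying B scales the three coordinate blocks by the diagonal matrices of
   eigenvalues D_k, D_{l\k}, D_l^perp, so that
   tan angle (V_k, B X) = ||[D_{l\k} A_2; D_l^perp A_3] D_k^-1||.  The factor
   D_k^-1 costs 1/sigma_k, and writing
   sigma_{k+1}^2 |A_2 x|^2 + sigma_{l+1}^2 |A_3 x|^2
     = sigma_{l+1}^2 |A x|^2 + (sigma_{k+1}^2 - sigma_{l+1}^2) |A_2 x|^2
   bounds the remaining norm by sigma_{l+1} ||A|| + (sigma_{k+1} - sigma_{l+1}) ||A_2||. *)

Section ComplexMatrices.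
Variable R : realType.
Local Notation C := R[i].
Local Open Scope classical_set_scope.

Definition sqnorm n (x : 'cV[C]_n) : R :=
  \sum_(i < n) (complex.Re (x i 0) ^+ 2 + complex.Im (x i 0) ^+ 2).

Lemma sqnorm_ge0 n (x : 'cV[C]_n) : 0 <= sqnorm x.
Proof. by apply: sumr_ge0 => i _; rewrite addr_ge0 // sqr_ge0. Qed.

Lemma vnormE n (x : 'cV[C]_n) : vnorm x = Num.sqrt (sqnorm x).
Proof. by []. Qed.

Lemma vnorm_ge0 n (x : 'cV[C]_n) : 0 <= vnorm x.
Proof. exact: sqrtr_ge0. Qed.

Lemma sqr_vnorm n (x : 'cV[C]_n) : vnorm x ^+ 2 = sqnorm x.
Proof. by rewrite vnormE sqr_sqrtr // sqnorm_ge0. Qed.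

Lemma sqnorm_eq0 n (x : 'cV[C]_n) : (sqnorm x == 0) = (x == 0).
Proof.
apply/idP/idP => [/eqP x0|/eqP->]; last first.
  by apply/eqP/big1 => i _; rewrite mxE expr0n addr0.
apply/eqP/matrixP => i j; rewrite (ord1 j) mxE.
have /(_ i isT) := psumr_eq0P (fun i _ => addr_ge0 (sqr_ge0 _) (sqr_ge0 _)) x0.
case: (x i 0) => a b /= /eqP; rewrite paddr_eq0 ?sqr_ge0 // !sqrf_eq0.
by case/andP => /eqP -> /eqP ->.
Qed.

Lemma sqnorm0 n : sqnorm (0 : 'cV[C]_n) = 0.
Proof. by apply/eqP; rewrite sqnorm_eq0. Qed.

Lemma sqnorm_gt0 n (x : 'cV[C]_n) : (0 < sqnorm x) = (x != 0).
Proof. by rewrite lt_def sqnorm_eq0 sqnorm_ge0 andbT. Qed.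

Lemma sqnorm_col_mx m n (a : 'cV[C]_m) (b : 'cV[C]_n) :
  sqnorm (col_mx a b) = sqnorm a + sqnorm b.
Proof.
by rewrite /sqnorm big_split_ord; congr (_ + _); apply: eq_bigr => i _;
  rewrite ?col_mxEu ?col_mxEd.
Qed.

Lemma sqnorm_coord_le n (x : 'cV[C]_n) j :
  complex.Re (x j 0) ^+ 2 + complex.Im (x j 0) ^+ 2 <= sqnorm x.
Proof.
rewrite /sqnorm (bigD1 j) //= lerDl.
by apply: sumr_ge0 => i _; rewrite addr_ge0 // sqr_ge0.
Qed.

Lemma adjmx_mul m n p (A : 'M[C]_(m, n)) (B : 'M[C]_(n, p)) :
  adjmx (A *m B) = adjmx B *m adjmx A.
Proof. by rewrite /adjmx map_mxM trmx_mul. Qed.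

Lemma adjmx_mulmx_self n (x : 'cV[C]_n) : (adjmx x *m x) 0 0 = (sqnorm x)%:C%C.
Proof.
rewrite !mxE /sqnorm rmorph_sum; apply: eq_bigr => i _; rewrite !mxE.
by case: (x i 0) => a b; apply/eqP; rewrite eq_complex /=; apply/andP; split;
  apply/eqP; ring.
Qed.

Lemma sqnorm_unitary n (V : 'M[C]_n) (x : 'cV[C]_n) :
  adjmx V *m V = 1%:M -> sqnorm (V *m x) = sqnorm x.
Proof.
move=> unitV; have := adjmx_mulmx_self (V *m x).
by rewrite adjmx_mul -mulmxA (mulmxA (adjmx V)) unitV mul1mx adjmx_mulmx_self => -[].
Qed.

Lemma sqr_Re_Im_scale (a : R) (z : C) :
  complex.Re ((a%:C)%C * z) ^+ 2 + complex.Im ((a%:C)%C * z) ^+ 2 =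
  a ^+ 2 * (complex.Re z ^+ 2 + complex.Im z ^+ 2).
Proof. by case: z => u v /=; ring. Qed.

Lemma vnorm_scale n (a : R) (x : 'cV[C]_n) :
  0 <= a -> vnorm ((a%:C)%C *: x) = a * vnorm x.
Proof.
move=> a0; rewrite !vnormE /sqnorm.
under eq_bigr do rewrite mxE sqr_Re_Im_scale.
by rewrite -mulr_sumr sqrtrM ?sqr_ge0 // sqrtr_sqr ger0_norm.
Qed.

Definition rdiag n (d : 'I_n -> R) : 'M[C]_n := diag_mx (\row_i (d i)%:C%C).

Lemma rdiag_mulmxE n (d : 'I_n -> R) (x : 'cV[C]_n) i :
  (rdiag d *m x) i 0 = (d i)%:C%C * x i 0.
Proof. by rewrite mul_diag_mx !mxE. Qed.

Lemma sqnorm_rdiag_le n (d : 'I_n -> R) (c : R) (x : 'cV[C]_n) :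
  (forall i, d i ^+ 2 <= c) -> sqnorm (rdiag d *m x) <= c * sqnorm x.
Proof.
move=> dc; rewrite /sqnorm mulr_sumr; apply: ler_sum => i _.
by rewrite rdiag_mulmxE sqr_Re_Im_scale ler_wpM2r ?addr_ge0 ?sqr_ge0.
Qed.

Lemma sqnorm_rdiag_ge n (d : 'I_n -> R) (c : R) (x : 'cV[C]_n) :
  (forall i, c <= d i ^+ 2) -> c * sqnorm x <= sqnorm (rdiag d *m x).
Proof.
move=> cd; rewrite /sqnorm mulr_sumr; apply: ler_sum => i _.
by rewrite rdiag_mulmxE sqr_Re_Im_scale ler_wpM2r ?addr_ge0 ?sqr_ge0.
Qed.

Lemma rdiag_unitmx n (d : 'I_n -> R) : (forall i, d i != 0) -> rdiag d \in unitmx.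
Proof.
move=> d_neq0; rewrite unitmxE det_diag unitfE.
by apply/prodf_neq0 => i _; rewrite mxE; apply: contra (d_neq0 i) => /eqP [->].
Qed.

Lemma rdiag_mul_col_mx n1 n2 m (d : 'I_(n1 + n2) -> R)
    (A1 : 'M[C]_(n1, m)) (A2 : 'M[C]_(n2, m)) :
  rdiag d *m col_mx A1 A2 =
  col_mx (rdiag (d \o lshift n2) *m A1) (rdiag (d \o @rshift n1 n2) *m A2).
Proof.
apply/matrixP => i j; rewrite !mul_diag_mx !mxE.
by case: splitP => i' ei; rewrite !mxE; congr ((d _)%:C%C * _); apply: val_inj.
Qed.

Lemma eigenvectors_mulmx n (B V : 'M[C]_n) (d : 'I_n -> R) :
  (forall i, B *m col i V = (d i)%:C%C *: col i V) -> B *m V = V *m rdiag d.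
Proof.
move=> eigV; apply/matrixP => a i.
have /matrixP /(_ a 0) := eigV i; rewrite mul_mx_diag !mxE mulrC => <-.
by apply: eq_bigr => j _; rewrite mxE.
Qed.

Lemma invmxM n (A B : 'M[C]_n) : A \in unitmx -> B \in unitmx ->
  invmx (A *m B) = invmx B *m invmx A.
Proof.
move=> uA uB; have uAB : A *m B \in unitmx by rewrite unitmx_mul uA uB.
have rinv : A *m B *m (invmx B *m invmx A) = 1%:M.
  by rewrite -mulmxA (mulmxA B) mulmxV // mul1mx mulmxV.
by rewrite -[LHS]mulmx1 -rinv mulmxA mulVmx // mul1mx.
Qed.

Lemma Re_Im_mul_le (a z : C) :
  `|complex.Re z| <= 1 -> `|complex.Im z| <= 1 ->
  `|complex.Re (a * z)| <= `|complex.Re a| + `|complex.Im a| /\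
  `|complex.Im (a * z)| <= `|complex.Re a| + `|complex.Im a|.
Proof.
case: a z => a b [c d] /= c1 d1; split.
  by apply: le_trans (ler_normB _ _) _; rewrite !normrM lerD // ler_piMr.
by apply: le_trans (ler_normD _ _) _; rewrite !normrM lerD // ler_piMr.
Qed.

Lemma Re_sum I (r : seq I) (P : pred I) (F : I -> C) :
  complex.Re (\sum_(i <- r | P i) F i) = \sum_(i <- r | P i) complex.Re (F i).
Proof. by apply: (big_morph (@complex.Re R)) => // -[a b] [c d]. Qed.

Lemma Im_sum I (r : seq I) (P : pred I) (F : I -> C) :
  complex.Im (\sum_(i <- r | P i) F i) = \sum_(i <- r | P i) complex.Im (F i).
Proof. by apply: (big_morph (@complex.Im R)) => // -[a b] [c d]. Qed.

Lemma Re_Im_le1 n (x : 'cV[C]_n) j : sqnorm x <= 1 ->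
  `|complex.Re (x j 0)| <= 1 /\ `|complex.Im (x j 0)| <= 1.
Proof.
move=> x1; have := le_trans (sqnorm_coord_le x j) x1.
move: (complex.Re _) (complex.Im _) => a b ab1.
by split; rewrite ler_norml; apply/andP; split; nra.
Qed.

Lemma specnorm_set_ubound m n (A : 'M[C]_(m, n)) :
  has_ubound [set r | exists x : 'cV[C]_n, vnorm x <= 1 /\ r = vnorm (A *m x)].
Proof.
pose K i := \sum_j (`|complex.Re (A i j)| + `|complex.Im (A i j)|).
exists (Num.sqrt (\sum_i 2 * K i ^+ 2)) => _ [x [x1 ->]].
have {}x1 : sqnorm x <= 1 by rewrite -sqr_vnorm -(expr1n _ 2) lerXn2r ?nnegrE ?vnorm_ge0.
rewrite vnormE ler_sqrt; last by apply: sumr_ge0 => i _; rewrite mulr_ge0 ?sqr_ge0.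
apply: ler_sum => i _; rewrite mulr2n mulrDl mul1r.
have [ReK ImK] : `|complex.Re ((A *m x) i 0)| <= K i /\
                 `|complex.Im ((A *m x) i 0)| <= K i.
  rewrite mxE Re_sum Im_sum; split; apply: le_trans (ler_norm_sum _ _ _) _;
    apply: ler_sum => j _; have [Rej Imj] := Re_Im_le1 j x1;
    by have [] := Re_Im_mul_le (A i j) Rej Imj.
by rewrite lerD // -real_normK ?num_real // lerXn2r ?nnegrE // (le_trans _ ReK, le_trans _ ImK).
Qed.

Lemma specnorm_ge0 m n (A : 'M[C]_(m, n)) : 0 <= specnorm A.
Proof.
apply: ub_le_sup; first exact: specnorm_set_ubound.
by exists 0; rewrite mulmx0 !vnormE !sqnorm0 sqrtr0 ler01.
Qed.

Lemma vnorm_mulmx_le m n (A : 'M[C]_(m, n)) (x : 'cV[C]_n) :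
  vnorm (A *m x) <= specnorm A * vnorm x.
Proof.
have [->|x0] := eqVneq x 0; first by rewrite mulmx0 !vnormE !sqnorm0 sqrtr0 mulr0.
have nx_gt0 : 0 < vnorm x by rewrite vnormE sqrtr_gt0 sqnorm_gt0.
have nxV_ge0 : 0 <= (vnorm x)^-1 by rewrite invr_ge0 ltW.
pose u := ((vnorm x)^-1)%:C%C *: x.
have : vnorm (A *m u) <= specnorm A.
  apply: ub_le_sup; first exact: specnorm_set_ubound.
  by exists u; rewrite vnorm_scale // mulVf // gt_eqF.
by rewrite /u -scalemxAr vnorm_scale // -ler_pdivrMr // mulrC.
Qed.

Lemma specnorm_le m n (A : 'M[C]_(m, n)) (c : R) : 0 <= c ->
  (forall x, vnorm (A *m x) <= c * vnorm x) -> specnorm A <= c.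
Proof.
move=> c0 Ac; apply: ge_sup => [|_ [x [x1 ->]]].
  by exists 0, 0; rewrite mulmx0 !vnormE !sqnorm0 sqrtr0 ler01.
by apply: le_trans (Ac x) _; rewrite ler_piMr.
Qed.

Lemma sqnorm_mulmx_le m n (A : 'M[C]_(m, n)) (x : 'cV[C]_n) :
  sqnorm (A *m x) <= specnorm A ^+ 2 * sqnorm x.
Proof.
rewrite -!sqr_vnorm -exprMn lerXn2r ?nnegrE ?mulr_ge0 ?vnorm_ge0 ?specnorm_ge0 //.
exact: vnorm_mulmx_le.
Qed.

Lemma specnorm_le_sqnorm m n (A : 'M[C]_(m, n)) (c : R) : 0 <= c ->
  (forall x, sqnorm (A *m x) <= c ^+ 2 * sqnorm x) -> specnorm A <= c.
Proof.
move=> c0 Ac; apply: specnorm_le => // x.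
rewrite !vnormE -(ger0_norm c0) -sqrtr_sqr -sqrtrM ?sqr_ge0 // ler_sqrt //.
by rewrite mulr_ge0 ?sqr_ge0 ?sqnorm_ge0.
Qed.

Lemma specnorm_usubmx_le m1 m2 n (A1 : 'M[C]_(m1, n)) (A2 : 'M[C]_(m2, n)) :
  specnorm A1 <= specnorm (col_mx A1 A2).
Proof.
apply: specnorm_le_sqnorm => [|x]; first exact: specnorm_ge0.
apply: le_trans (sqnorm_mulmx_le _ x).
by rewrite mul_col_mx sqnorm_col_mx lerDl sqnorm_ge0.
Qed.

Lemma sqr_interpolate_le (a b s t : R) : 0 <= a <= b -> 0 <= t <= s ->
  a ^+ 2 * s ^+ 2 + (b ^+ 2 - a ^+ 2) * t ^+ 2 <= (a * s + (b - a) * t) ^+ 2.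
Proof.
case/andP=> a0 ab /andP [t0 ts].
(* the difference of the two sides is 2 a (b - a) t (s - t) *)
have : 0 <= a * (b - a) * t * (s - t) by rewrite !mulr_ge0 ?subr_ge0.
nra.
Qed.

Lemma specnorm_col_rdiag_le m p k (A2 : 'M[C]_(m, k)) (A3 : 'M[C]_(p, k))
    (d2 : 'I_m -> R) (d3 : 'I_p -> R) (a b : R) :
  0 <= a <= b -> (forall i, `|d2 i| <= b) -> (forall i, `|d3 i| <= a) ->
  specnorm (col_mx (rdiag d2 *m A2) (rdiag d3 *m A3)) <=
    a * specnorm (col_mx A2 A3) + (b - a) * specnorm A2.
Proof.
move=> a_le_b d2b d3a; have /andP [a0 ab] := a_le_b.
set s := specnorm (col_mx A2 A3); set t := specnorm A2.
have t_le_s : 0 <= t <= s by rewrite specnorm_ge0 specnorm_usubmx_le.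
have /andP [t0 ts] := t_le_s.
apply: specnorm_le_sqnorm => [|x]; first by rewrite addr_ge0 ?mulr_ge0 ?subr_ge0 ?(le_trans t0 ts).
rewrite mul_col_mx -!mulmxA sqnorm_col_mx.
have b2a2 : 0 <= b ^+ 2 - a ^+ 2 by rewrite subr_ge0 lerXn2r ?nnegrE ?(le_trans a0 ab).
have sqr_le d (e : R) : `|d| <= e -> d ^+ 2 <= e ^+ 2.
  by move=> de; rewrite -real_normK ?num_real // lerXn2r ?nnegrE // (le_trans _ de).
have h2 := sqnorm_rdiag_le (A2 *m x) (fun i => sqr_le _ _ (d2b i)).
have h3 := sqnorm_rdiag_le (A3 *m x) (fun i => sqr_le _ _ (d3a i)).
have hs : sqnorm (A2 *m x) + sqnorm (A3 *m x) <= s ^+ 2 * sqnorm x.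
  by rewrite -sqnorm_col_mx -mul_col_mx sqnorm_mulmx_le.
have hs' := ler_wpM2l (sqr_ge0 a) hs.
have ht' := ler_wpM2l b2a2 (sqnorm_mulmx_le A2 x).
have := ler_wpM2r (sqnorm_ge0 x) (sqr_interpolate_le a_le_b t_le_s).
move: h2 h3 hs' ht'; rewrite -/t; lra.
Qed.

Lemma specnorm_mulmx_invmx_rdiag_le q k (M : 'M[C]_(q, k)) (d : 'I_k -> R) (c : R) :
  0 < c -> (forall i, c <= d i) -> specnorm (M *m invmx (rdiag d)) <= specnorm M / c.
Proof.
move=> c0 cd; have d_gt0 i : 0 < d i := lt_le_trans c0 (cd i).
have uD : rdiag d \in unitmx by apply: rdiag_unitmx => i; rewrite gt_eqF.
apply: specnorm_le_sqnorm => [|x]; first by rewrite divr_ge0 ?specnorm_ge0 ?ltW.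
set w := invmx (rdiag d) *m x.
have cw : c ^+ 2 * sqnorm w <= sqnorm x.
  have -> : x = rdiag d *m w by rewrite /w mulKVmx.
  apply: sqnorm_rdiag_ge => i.
  by rewrite lerXn2r ?nnegrE ?cd // ltW.
rewrite -mulmxA -/w; apply: le_trans (sqnorm_mulmx_le M w) _.
rewrite expr_div_n -[_ / _ * _]mulrA.
by apply: ler_wpM2l; [exact: sqr_ge0 | rewrite ler_pdivlMl ?exprn_gt0].
Qed.

Lemma ler_sqrt_ratio (c a b : R) : 0 < c -> 0 < a -> 0 <= b ->
  (c <= Num.sqrt a / Num.sqrt (a + b)) = (b <= (c ^- 2 - 1) * a).
Proof.
move=> c0 a0 b0; have ab0 : 0 < a + b by rewrite ltr_wpDr.
rewrite -(ler_pXn2r (_ : 0 < 2)%N) ?nnegrE ?divr_ge0 ?sqrtr_ge0 ?(ltW c0) //.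
rewrite expr_div_n !sqr_sqrtr ?(ltW a0) ?(ltW ab0) // ler_pdivlMr //.
by rewrite mulrBl mul1r lerBrDr addrC ler_pdivlMl ?exprn_gt0.
Qed.

Lemma inf_vnorm_ratio q k (A : 'M[C]_(q, k)) : (0 < k)%N ->
  inf [set vnorm x / Num.sqrt (sqnorm x + sqnorm (A *m x)) | x in [set x | x != 0]]
  = (Num.sqrt (1 + specnorm A ^+ 2))^-1.
Proof.
move=> k0; set S := [set _ | _ in _]; set s := specnorm A.
set c0 := (Num.sqrt _)^-1.
have s2_ge0 : 0 <= s ^+ 2 := sqr_ge0 s.
have c0_gt0 : 0 < c0 by rewrite invr_gt0 sqrtr_gt0; lra.
have c0E : c0 ^- 2 - 1 = s ^+ 2.
  by rewrite exprVn invrK sqr_sqrtr; [rewrite addrAC subrr add0r | lra].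
pose e : 'cV[C]_k := const_mx 1.
have e_neq0 : e != 0.
  by apply/eqP => /matrixP/(_ (Ordinal k0) 0); rewrite !mxE => /eqP; rewrite oner_eq0.
have S_e : S (vnorm e / Num.sqrt (sqnorm e + sqnorm (A *m e))) by exists e.
have S_lb : forall r, S r -> c0 <= r.
  move=> _ [x x0 <-]; rewrite vnormE ler_sqrt_ratio ?sqnorm_gt0 ?sqnorm_ge0 // c0E.
  exact: sqnorm_mulmx_le.
have c0_le_c : c0 <= inf S by apply: lb_le_inf S_lb; eexists; exact: S_e.
apply/le_anti; rewrite c0_le_c andbT; set c := inf S.
have c_gt0 : 0 < c := lt_le_trans c0_gt0 c0_le_c.
have c_lb x : x != 0 -> sqnorm (A *m x) <= (c ^- 2 - 1) * sqnorm x.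
  move=> x0; rewrite -ler_sqrt_ratio ?sqnorm_gt0 ?sqnorm_ge0 // -vnormE.
  by apply: ge_inf; [exists c0; exact: S_lb | exists x].
have g_ge0 : 0 <= c ^- 2 - 1.
  rewrite -(pmulr_lge0 _ (_ : 0 < sqnorm e)) ?sqnorm_gt0 //.
  exact: le_trans (sqnorm_ge0 _) (c_lb e e_neq0).
have : s <= Num.sqrt (c ^- 2 - 1).
  apply: specnorm_le_sqnorm => [|x]; first exact: sqrtr_ge0.
  have [->|x0] := eqVneq x 0; first by rewrite mulmx0 !sqnorm0 mulr0.
  by rewrite sqr_sqrtr // c_lb.
move/(lerXn2r 2); rewrite ?nnegrE ?sqrtr_ge0 ?specnorm_ge0 // sqr_sqrtr // => s2_le.
rewrite -(ler_pXn2r (_ : 0 < 2)%N) ?nnegrE ?(ltW c_gt0) ?(ltW c0_gt0) //.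
rewrite /c0 exprVn sqr_sqrtr; last by lra.
rewrite -[c ^+ 2]invrK lef_pV2 ?posrE ?invr_gt0 ?exprn_gt0 //; first by lra.
by rewrite ltr_wpDr.
Qed.

Lemma tan_acos_inv_sqrt (s : R) : 0 <= s -> tan (acos (Num.sqrt (1 + s ^+ 2))^-1) = s.
Proof.
move=> s0; set r := Num.sqrt _.
have s2_ge0 : 0 <= s ^+ 2 := sqr_ge0 s.
have r2 : r ^+ 2 = 1 + s ^+ 2 by rewrite sqr_sqrtr //; lra.
have r1 : 1 <= r by rewrite -sqrtr1 ler_sqrt; lra.
have r_gt0 : 0 < r by lra.
have rV_gt0 : 0 < r^-1 by rewrite invr_gt0.
have rV_le1 : r^-1 <= 1 by rewrite invr_le1 ?unitfE ?gt_eqF.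
have rV_itv : -1 <= r^-1 <= 1 by apply/andP; split; lra.
rewrite /tan acosK ?in_itv //= sin_acos //.
have -> : 1 - r^-1 ^+ 2 = (s / r) ^+ 2.
  by rewrite exprVn expr_div_n r2; field; rewrite gt_eqF //; lra.
by rewrite sqrtr_sqr ger0_norm ?divr_ge0 ?(ltW r_gt0) // invrK divfK // gt_eqF.
Qed.

Lemma tan_angle_blocks k m p (V : 'M[C]_(k + m + p)) (C1 : 'M[C]_k)
    (C2 : 'M[C]_(m, k)) (C3 : 'M[C]_(p, k)) :
  (0 < k)%N -> adjmx V *m V = 1%:M -> C1 \in unitmx ->
  tan_angle (lsubmx (lsubmx V)) (V *m col_mx (col_mx C1 C2) C3) =
  specnorm (col_mx C2 C3 *m invmx C1).
Proof.
move=> k0 unitV uC1; set A := col_mx C2 C3 *m invmx C1; set Z := V *m _.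
have project y : adjmx (lsubmx (lsubmx V)) *m (Z *m y) = C1 *m y.
  have -> : adjmx (lsubmx (lsubmx V)) = usubmx (usubmx (adjmx V)).
    by apply/matrixP => i j; rewrite !mxE.
  by rewrite /Z !mulmxA !mul_usub_mx unitV mul1mx !mul_col_mx !col_mxKu.
have sqnormZ y : sqnorm (Z *m y) = sqnorm (C1 *m y) + sqnorm (A *m (C1 *m y)).
  rewrite -mulmxA sqnorm_unitary // !mul_col_mx !sqnorm_col_mx -addrA.
  by rewrite /A mulmxA mulmxKV // mul_col_mx sqnorm_col_mx.
rewrite /tan_angle /max_angle /cos_max_angle.
rewrite (_ : [set _ | _] =
    [set vnorm x / Num.sqrt (sqnorm x + sqnorm (A *m x)) | x in [set x | x != 0]]).
  by rewrite inf_vnorm_ratio // tan_acos_inv_sqrt // specnorm_ge0.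
apply/seteqP; split => r /=.
- case=> y [Zy0 ->]; exists (C1 *m y); last by rewrite project !vnormE sqnormZ.
  by apply: contraNneq Zy0 => C1y0; rewrite -sqnorm_eq0 sqnormZ C1y0 mulmx0 !sqnorm0 addr0.
- case=> x x0 <-; exists (invmx C1 *m x); rewrite project !vnormE sqnormZ mulKVmx //.
  by rewrite -sqnorm_eq0 sqnormZ mulKVmx // gt_eqF // ltr_wpDr ?sqnorm_ge0 ?sqnorm_gt0.
Qed.

Lemma tan_angle_rdiag_blocks_le k m p (V : 'M[C]_(k + m + p))
    (C1 : 'M[C]_k) (C2 : 'M[C]_(m, k)) (C3 : 'M[C]_(p, k))
    (d1 : 'I_k -> R) (d2 : 'I_m -> R) (d3 : 'I_p -> R) (a b c : R) :
  (0 < k)%N -> adjmx V *m V = 1%:M -> C1 \in unitmx ->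
  0 < c -> (forall i, c <= d1 i) -> 0 <= a <= b ->
  (forall i, `|d2 i| <= b) -> (forall i, `|d3 i| <= a) ->
  tan_angle (lsubmx (lsubmx V))
    (V *m col_mx (col_mx (rdiag d1 *m C1) (rdiag d2 *m C2)) (rdiag d3 *m C3))
  <= (a * specnorm (col_mx C2 C3 *m invmx C1) + (b - a) * specnorm (C2 *m invmx C1)) / c.
Proof.
move=> k0 unitV uC1 c0 cd1 ab d2b d3a.
have uD1 : rdiag d1 \in unitmx.
  by apply: rdiag_unitmx => i; rewrite gt_eqF // (lt_le_trans c0).
rewrite tan_angle_blocks ?unitmx_mul ?uD1 // invmxM // mulmxA mul_col_mx.
rewrite -[rdiag d2 *m C2 *m _]mulmxA -[rdiag d3 *m C3 *m _]mulmxA.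
apply: le_trans (specnorm_mulmx_invmx_rdiag_le _ c0 cd1) _.
by rewrite ler_pM2r ?invr_gt0 // mul_col_mx; apply: specnorm_col_rdiag_le.
Qed.

End ComplexMatrices.

Theorem theorem5p1 (R : realType) (k m p : nat)
  (B V : 'M[R[i]]_(k + m + p)) (sigma : nat -> R)
  (X : 'M[R[i]]_(k + m + p, k))
  (Xk : 'M[R[i]]_k) (Xlk : 'M[R[i]]_(m, k)) (Xp : 'M[R[i]]_(p, k)) :
  (0 < k)%N -> (0 < m)%N -> (0 < p)%N ->
  adjmx B = B ->
  (forall x : 'cV[R[i]]_(k + m + p), x != 0 ->
     0 < complex.Re ((adjmx x *m B *m x) 0 0) /\
     complex.Im ((adjmx x *m B *m x) 0 0) = 0) ->
  adjmx V *m V = 1%:M ->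
  (forall i : 'I_(k + m + p), B *m col i V = ((sigma i)%:C)%C *: col i V) ->
  (forall i j : 'I_(k + m + p), (i <= j)%N -> sigma j <= sigma i) ->
  (forall i : 'I_(k + m + p), 0 < sigma i) ->
  adjmx X *m X = 1%:M ->
  X = V *m col_mx (col_mx Xk Xlk) Xp ->
  Xk \in unitmx ->
  let Vk : 'M[R[i]]_(k + m + p, k) := lsubmx (lsubmx V) in
  tan_angle Vk X != 0 ->
  tan_angle Vk (B *m X) / tan_angle Vk X <=
    sigma (k + m)%N / sigma k.-1
    + (sigma k - sigma (k + m)%N) / sigma k.-1
      * (specnorm (Xlk *m invmx Xk) / specnorm (col_mx Xlk Xp *m invmx Xk)).
Proof.
move=> k0 _ p0 _ _ unitV eigV sigma_mono sigma_pos _ XE uXk Vk tanX_neq0.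
have sigma_gt0 i : (i < k + m + p)%N -> 0 < sigma i.
  by move=> lt_i; exact: (sigma_pos (Ordinal lt_i)).
have sigma_le i j : (i <= j < k + m + p)%N -> `|sigma j| <= sigma i.
  case/andP=> ij jn; rewrite ger0_norm ?(ltW (sigma_gt0 _ jn)) //.
  exact: (sigma_mono (Ordinal (leq_ltn_trans ij jn)) (Ordinal jn)).
set s := specnorm (col_mx Xlk Xp *m invmx Xk); set t := specnorm (Xlk *m invmx Xk).
have tanX : tan_angle Vk X = s by rewrite XE tan_angle_blocks.
have BX : B *m X = V *m col_mx
    (col_mx (rdiag (fun i : 'I_k => sigma i) *m Xk)
            (rdiag (fun i : 'I_m => sigma (k + i)%N) *m Xlk))
    (rdiag (fun i : 'I_p => sigma (k + m + i)%N) *m Xp).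
  by rewrite XE mulmxA (eigenvectors_mulmx eigV) -mulmxA !rdiag_mul_col_mx.
have tanBX : tan_angle Vk (B *m X) <=
    (sigma (k + m)%N * s + (sigma k - sigma (k + m)%N) * t) / sigma k.-1.
  rewrite BX; apply: tan_angle_rdiag_blocks_le => // [|i||i|i].
  - by apply: sigma_gt0; lia.
  - by apply: le_trans (ler_norm _) (sigma_le _ _ _); have := ltn_ord i; lia.
  - apply/andP; split; first by apply/ltW/sigma_gt0; lia.
    by apply: le_trans (ler_norm _) (sigma_le _ _ _); lia.
  - by apply: sigma_le; have := ltn_ord i; lia.
  - by apply: sigma_le; have := ltn_ord i; lia.
have s_gt0 : 0 < s by rewrite lt_def -tanX tanX_neq0 tanX /s specnorm_ge0.
rewrite tanX (_ : _ + _ =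
    (sigma (k + m)%N * s + (sigma k - sigma (k + m)%N) * t) / sigma k.-1 / s).
  by rewrite ler_pM2r ?invr_gt0.
by field; rewrite !gt_eqF // sigma_gt0 //; lia.
Qed.
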